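(* For the black-bounce Kerr--Newman spacetime (metric in the context), define the antisymmetric tensor $f_{\mu\nu}$ in coordinates $(t,r,\theta,\phi)$ by the nonzero components $$f_{tr}=-f_{rt}=-a\cos\theta,\quad f_{r\phi}=-f_{\phi r}=-a^2\cos\theta\sin^2\theta,$$ $$f_{t\theta}=-f_{\theta t}=a\sqrt{r^2+\ell^2}\sin\theta,\quad f_{\theta\phi}=-f_{\phi\theta}=\sqrt{r^2+\ell^2}\,\sin\theta\,(r^2+\ell^2+a^2).$$ Then $f_{\mu\alpha}f^{\alpha}{}_{\nu}=K_{\mu\nu}$, where $K_{\mu\nu}$ is the Killing tensor defined in the context, but for $\ell\neq0$ (and $a\ne 0$) $f_{\mu\nu}$ is not a Killing--Yano tensor: $f_{\mu(\nu;\alpha)}\neq0$.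
   Context: The black-bounce Kerr--Newman spacetime is $$\mathrm{d}s^2=-\frac{\Delta}{\rho^2}(a\sin^2\theta\,\mathrm{d}\phi-\mathrm{d}t)^2+\frac{\sin^2\theta}{\rho^2}\big[(r^2+\ell^2+a^2)\mathrm{d}\phi-a\,\mathrm{d}t\big]^2+\frac{\rho^2}{\Delta}\mathrm{d}r^2+\rho^2\mathrm{d}\theta^2,$$ with $\rho^2=r^2+\ell^2+a^2\cos^2\theta$, $\Delta=r^2+\ell^2+a^2-2m\sqrt{r^2+\ell^2}+Q^2$. The Killing tensor is $K_{\mu\nu}=\rho^2(l_\mu n_\nu+l_\nu n_\mu)+(r^2+\ell^2)g_{\mu\nu}$ with $l^\mu=\big(\frac{r^2+\ell^2+a^2}{\Delta},1,0,\frac{a}{\Delta}\big)$ and $n^\mu=\frac{1}{2\rho^2}(r^2+\ell^2+a^2,-\Delta,0,a)$. Indices are raised/lowered with this metric. *)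

From HB Require Import structures.
From mathcomp Require Import all_boot all_order all_algebra.
From mathcomp Require Import all_classical all_reals all_analysis.
Set Implicit Arguments. Unset Strict Implicit. Unset Printing Implicit Defensive.
Import Order.TTheory GRing.Theory Num.Theory.
Local Open Scope ring_scope.

(* Coordinates x : 'I_4 -> R with x 0 = t, x 1 = r, x 2 = theta, x 3 = phi. *)
Section BBKN.
Variable R : realType.
Variables m a l Q : R.

Definition it : 'I_4 := @Ordinal 4 0 isT.
Definition ir : 'I_4 := @Ordinal 4 1 isT.
Definition ith : 'I_4 := @Ordinal 4 2 isT.
Definition iph : 'I_4 := @Ordinal 4 3 isT.

Definition crd (x : 'I_4 -> R) := x ir.
Definition cth (x : 'I_4 -> R) := x ith.

Definition rho2 (x : 'I_4 -> R) : R := (crd x)^+2 + l^+2 + a^+2 * (cos (cth x))^+2.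
Definition Delta (x : 'I_4 -> R) : R :=
  (crd x)^+2 + l^+2 + a^+2 - 2 * m * Num.sqrt ((crd x)^+2 + l^+2) + Q^+2.

Definition w1 (x : 'I_4 -> R) (i : 'I_4) : R :=
  if i == it then -1 else if i == iph then a * (sin (cth x))^+2 else 0.
Definition w2 (x : 'I_4 -> R) (i : 'I_4) : R :=
  if i == it then - a else if i == iph then (crd x)^+2 + l^+2 + a^+2 else 0.

Definition gmet (x : 'I_4 -> R) : 'M[R]_4 :=
  \matrix_(i, j)
    (- (Delta x / rho2 x) * w1 x i * w1 x j
     + ((sin (cth x))^+2 / rho2 x) * w2 x i * w2 x j
     + (if (i == ir) && (j == ir) then rho2 x / Delta x else 0)
     + (if (i == ith) && (j == ith) then rho2 x else 0)).

Definition ginv (x : 'I_4 -> R) : 'M[R]_4 := invmx (gmet x).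

Definition lup (x : 'I_4 -> R) (i : 'I_4) : R :=
  if i == it then ((crd x)^+2 + l^+2 + a^+2) / Delta x
  else if i == ir then 1
  else if i == ith then 0 else a / Delta x.
Definition nup (x : 'I_4 -> R) (i : 'I_4) : R :=
  (2 * rho2 x)^-1 *
  (if i == it then (crd x)^+2 + l^+2 + a^+2
   else if i == ir then - Delta x
   else if i == ith then 0 else a).
Definition ldown (x : 'I_4 -> R) (i : 'I_4) : R := \sum_(j < 4) gmet x i j * lup x j.
Definition ndown (x : 'I_4 -> R) (i : 'I_4) : R := \sum_(j < 4) gmet x i j * nup x j.

Definition Kil (x : 'I_4 -> R) (i j : 'I_4) : R :=
  rho2 x * (ldown x i * ndown x j + ldown x j * ndown x i)
  + ((crd x)^+2 + l^+2) * gmet x i j.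

Definition fpart (x : 'I_4 -> R) (i j : 'I_4) : R :=
  if (i == it) && (j == ir) then - a * cos (cth x)
  else if (i == ir) && (j == iph) then - a^+2 * cos (cth x) * (sin (cth x))^+2
  else if (i == it) && (j == ith) then a * Num.sqrt ((crd x)^+2 + l^+2) * sin (cth x)
  else if (i == ith) && (j == iph) then
    Num.sqrt ((crd x)^+2 + l^+2) * sin (cth x) * ((crd x)^+2 + l^+2 + a^+2)
  else 0.
Definition fKY (x : 'I_4 -> R) (i j : 'I_4) : R := fpart x i j - fpart x j i.

Definition upd (x : 'I_4 -> R) (al : 'I_4) (s : R) : 'I_4 -> R :=
  fun i => if i == al then s else x i.
Definition partial (F : ('I_4 -> R) -> R) (al : 'I_4) (x : 'I_4 -> R) : R :=
  derive1 (fun s => F (upd x al s)) (x al).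

Definition Gamma (x : 'I_4 -> R) (lam mu nu : 'I_4) : R :=
  2^-1 * \sum_(s < 4) ginv x lam s *
    (partial (fun y => gmet y s nu) mu x + partial (fun y => gmet y s mu) nu x
     - partial (fun y => gmet y mu nu) s x).

Definition covf (x : 'I_4 -> R) (mu nu al : 'I_4) : R :=
  partial (fun y => fKY y mu nu) al x
  - \sum_(lam < 4) Gamma x lam al mu * fKY x lam nu
  - \sum_(lam < 4) Gamma x lam al nu * fKY x mu lam.

(* twice the symmetrization  f_{mu (nu ; al)} *)
Definition covf_sym (x : 'I_4 -> R) (mu nu al : 'I_4) : R :=
  covf x mu nu al + covf x mu al nu.

(* points where the metric is regular in these coordinates *)
Definition inDomain (x : 'I_4 -> R) : Prop :=
  Delta x != 0 /\ rho2 x != 0 /\ sin (cth x) != 0.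

End BBKN.

From HB Require Import structures.
From mathcomp Require Import all_boot all_order all_algebra.
From mathcomp Require Import all_classical all_reals all_analysis.
From mathcomp Require Import ring lra.
Set Implicit Arguments.
Unset Strict Implicit.
Unset Printing Implicit Defensive.
Import Order.TTheory GRing.Theory Num.Theory.
Local Open Scope ring_scope.

(* The inverse metric has the closed Kerr form [ginv_kerr]. Writing sin theta and
   cos theta through the half-angle tangent t, and sqrt(r^2 + l^2) as a variable q with
   q^2 = r^2 + l^2, both g g^-1 = 1 and f g^-1 f = K become identities between rational
   functions of q, t, a, m, Q.
   On the equatorial plane theta = pi/2 the component f_t(r;theta) of the symmetrised
   covariant derivative equals a (1 - r / sqrt(r^2 + l^2)). For l = 0 and r > 0 this
   vanishes, but for l != 0 it does not, since then sqrt(r^2 + l^2) > r. At r = 2|m| we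
   have Delta > 0, so the metric is regular at that point. *)

Lemma unit_circle_rational_param (F : realFieldType) (s c : F) :
  s ^+ 2 + c ^+ 2 = 1 -> s != 0 ->
  exists2 t : F, t != 0 & s = 2 * t / (1 + t ^+ 2) /\ c = (1 - t ^+ 2) / (1 + t ^+ 2).
Proof.
move=> hsc hs.
have hc : 1 + c != 0 by apply: contraNneq hs => hc; rewrite -sqrf_eq0; apply/eqP; nra.
have hs2 : s ^+ 2 = (1 - c) * (1 + c) by lra.
have ht2 : 1 + (s / (1 + c)) ^+ 2 = 2 / (1 + c) by rewrite expr_div_n hs2; field.
exists (s / (1 + c)); first by rewrite mulf_neq0 ?invr_eq0.
by rewrite ht2 expr_div_n hs2; split; field.
Qed.

Lemma big_ord4 (V : nmodType) (F : 'I_4 -> V) :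
  \sum_(i < 4) F i = F it + F ir + F ith + F iph.
Proof.
by rewrite !big_ord_recr big_ord0 /= add0r; congr (_ + _ + _ + _); congr F; apply: val_inj.
Qed.

Section PartialDerivative.
Variable R : realType.

Lemma partialE (F : ('I_4 -> R) -> R) (al : 'I_4) (x : 'I_4 -> R) (v : R) :
  is_derive (x al) 1 (fun s => F (upd x al s)) v -> partial F al x = v.
Proof. by move=> h; rewrite /partial derive1E; exact: derive_val. Qed.

Lemma partial_upd_const (F : ('I_4 -> R) -> R) (al : 'I_4) (x : 'I_4 -> R) :
  (forall s, F (upd x al s) = F x) -> partial F al x = 0.
Proof.
move=> h; rewrite /partial.
have -> : (fun s => F (upd x al s)) = cst (F x) by apply/funext => s; exact: h.
exact: derive1_cst.
Qed.
End PartialDerivative.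

Section RadialDerivatives.
Variable R : realType.
Variable c : R.

Lemma is_derive_sqr_add (r : R) : is_derive r 1 (fun s => s ^+ 2 + c) (2 * r).
Proof. by apply: is_derive_eq; rewrite /GRing.scale /=; ring. Qed.

Lemma is_derive_sqrt_sqr_add (r : R) : 0 < r ^+ 2 + c ->
  is_derive r 1 (fun s => Num.sqrt (s ^+ 2 + c)) (r / Num.sqrt (r ^+ 2 + c)).
Proof.
move=> hP.
have := @is_derive1_comp R Num.sqrt (fun s => s ^+ 2 + c) r _ _
  (is_derive1_sqrt hP) (is_derive_sqr_add r).
move/is_derive_eq; apply.
have hq : Num.sqrt (r ^+ 2 + c) != 0 by rewrite gt_eqF // sqrtr_gt0.
by field.
Qed.

Lemma is_derive_radial_potential (al be ga r : R) : 0 < r ^+ 2 + c ->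
  is_derive r 1 (fun s => al / Num.sqrt (s ^+ 2 + c) + be / (s ^+ 2 + c) + ga)
    (- al * r / Num.sqrt (r ^+ 2 + c) ^+ 3 - 2 * be * r / (r ^+ 2 + c) ^+ 2).
Proof.
move=> hP; have hq : Num.sqrt (r ^+ 2 + c) != 0 by rewrite gt_eqF // sqrtr_gt0.
have := @is_deriveV R _ r _ 1 hq (is_derive_sqrt_sqr_add hP).
have := @is_deriveV R _ r _ 1 (lt0r_neq0 hP) (is_derive_sqr_add r).
move=> dinvP dinvq; apply: is_derive_eq.
rewrite /GRing.scale /=.
by field; rewrite hq lt0r_neq0.
Qed.
End RadialDerivatives.

Section BlackBounceKerrNewman.
Variable R : realType.
Variables m a l Q : R.

Lemma inDomain_rational_coords (x : 'I_4 -> R) : inDomain m a l Q x ->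
  exists q t, [/\ Num.sqrt (x ir ^+ 2 + l ^+ 2) = q, x ir ^+ 2 + l ^+ 2 = q ^+ 2,
    sin (x ith) = 2 * t / (1 + t ^+ 2), cos (x ith) = (1 - t ^+ 2) / (1 + t ^+ 2) &
    [/\ t != 0, 1 + t ^+ 2 != 0, q ^+ 2 + a ^+ 2 - 2 * m * q + Q ^+ 2 != 0 &
        (q * (1 + t ^+ 2)) ^+ 2 + (a * (1 - t ^+ 2)) ^+ 2 != 0]].
Proof.
rewrite /inDomain /Delta /rho2 /crd /cth => -[hD [hrho hs]].
have hq2 : Num.sqrt (x ir ^+ 2 + l ^+ 2) ^+ 2 = x ir ^+ 2 + l ^+ 2.
  by rewrite sqr_sqrtr // addr_ge0 ?sqr_ge0.
have hsc : sin (x ith) ^+ 2 + cos (x ith) ^+ 2 = 1 by rewrite addrC cos2Dsin2.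
have [t ht [hst hct]] := unit_circle_rational_param hsc hs.
have h1t : 1 + t ^+ 2 != 0 by rewrite lt0r_neq0 // ltr_pwDl ?sqr_ge0.
exists (Num.sqrt (x ir ^+ 2 + l ^+ 2)), t; split => //.
move: hD hrho; rewrite -{1 3}hq2 hct.
move: (Num.sqrt _) => q hD hrho; split => //.
apply: contraNneq hrho => h0.
suff -> : q ^+ 2 + a ^+ 2 * ((1 - t ^+ 2) / (1 + t ^+ 2)) ^+ 2 =
    ((q * (1 + t ^+ 2)) ^+ 2 + (a * (1 - t ^+ 2)) ^+ 2) / (1 + t ^+ 2) ^+ 2.
  by rewrite h0 mul0r.
by field.
Qed.

(* [v1] and [v2] are dual to [w2] and [w1] up to the factor rho^2. *)
Definition v1 (x : 'I_4 -> R) (i : 'I_4) : R :=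
  if i == it then a * sin (cth x) ^+ 2 else if i == iph then 1 else 0.
Definition v2 (x : 'I_4 -> R) (i : 'I_4) : R :=
  if i == it then crd x ^+ 2 + l ^+ 2 + a ^+ 2 else if i == iph then a else 0.

Definition ginv_kerr (x : 'I_4 -> R) : 'M[R]_4 := \matrix_(i, j)
  ((rho2 a l x)^-1 * (- (Delta m a l Q x)^-1 * v2 x i * v2 x j
     + (sin (cth x) ^+ 2)^-1 * v1 x i * v1 x j
     + (if (i == ir) && (j == ir) then Delta m a l Q x else 0)
     + (if (i == ith) && (j == ith) then 1 else 0))).

Lemma mul_gmet_ginv_kerr x : inDomain m a l Q x -> gmet m a l Q x *m ginv_kerr x = 1%:M.
Proof.
move=> /inDomain_rational_coords[q [t [hq hP hs hc [ht h1t hD hrho]]]].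
apply/matrixP => i j; rewrite !mxE !big_ord_recr big_ord0 /= add0r !mxE.
rewrite /rho2 /Delta /w1 /w2 /v1 /v2 /crd /cth hq hP hs hc.
case: i => [[|[|[|[|//]]]] ?]; case: j => [[|[|[|[|//]]]] ?] /=.
all: by field; rewrite h1t ht hD hrho.
Qed.

Lemma ginvE x : inDomain m a l Q x -> ginv m a l Q x = ginv_kerr x.
Proof.
move=> /mul_gmet_ginv_kerr hx; have [hu _] := mulmx1_unit hx.
by rewrite /ginv -[invmx _]mulmx1 -hx mulmxA mulVmx // mul1mx.
Qed.

Lemma fKY_ginv_fKY x : inDomain m a l Q x -> forall mu nu : 'I_4,
  \sum_(al < 4) \sum_(be < 4) fKY a l x mu al * ginv m a l Q x al be * fKY a l x nu be
  = Kil m a l Q x mu nu.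
Proof.
move=> hx mu nu; rewrite ginvE //.
have [q [t [hq hP hs hc [ht h1t hD hrho]]]] := inDomain_rational_coords hx.
rewrite /Kil /ldown /ndown /lup /nup /fKY /fpart !big_ord_recr !big_ord0 /= !add0r !mxE.
rewrite /rho2 /Delta /w1 /w2 /v1 /v2 /crd /cth hq hP hs hc.
case: mu => [[|[|[|[|//]]]] ?]; case: nu => [[|[|[|[|//]]]] ?] /=.
all: by field; rewrite ?h1t ?ht ?hD ?hrho.
Qed.

Lemma partial_gmet_t x i j : partial (fun y => gmet m a l Q y i j) it x = 0.
Proof. by apply: partial_upd_const => s; rewrite /gmet !mxE /rho2 /Delta /w1 /w2 /crd /cth /upd. Qed.

Lemma partial_gmet_ph x i j : partial (fun y => gmet m a l Q y i j) iph x = 0.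
Proof. by apply: partial_upd_const => s; rewrite /gmet !mxE /rho2 /Delta /w1 /w2 /crd /cth /upd. Qed.

Lemma partial_gmet_thr al x : partial (fun y => gmet m a l Q y ith ir) al x = 0.
Proof. by apply: partial_upd_const => s; rewrite /gmet !mxE /w1 /w2 /=; ring. Qed.

Lemma partial_gmet_rth al x : partial (fun y => gmet m a l Q y ir ith) al x = 0.
Proof. by apply: partial_upd_const => s; rewrite /gmet !mxE /w1 /w2 /=; ring. Qed.
End BlackBounceKerrNewman.

Section Equator.
Variable R : realType.
Variables m a l Q : R.
Hypothesis l_neq0 : l != 0.

Let sqr_l_gt0 : 0 < l ^+ 2.
Proof. by rewrite lt0r sqr_ge0 sqrf_eq0 l_neq0. Qed.

Definition equator (r : R) : 'I_4 -> R :=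
  fun i => if i == ir then r else if i == ith then pi / 2 else 0.

Lemma sqr_add_sqr_gt0 (r : R) : 0 < r ^+ 2 + l ^+ 2.
Proof. exact: ltr_wpDl (sqr_ge0 r) sqr_l_gt0. Qed.

Lemma lt_sqrt_sqr_add_sqr (r : R) : r < Num.sqrt (r ^+ 2 + l ^+ 2).
Proof.
apply: (le_lt_trans (ler_norm r)).
by rewrite -sqrtr_sqr ltr_sqrt ?sqr_add_sqr_gt0 // ltrDl sqr_l_gt0.
Qed.

Lemma upd_equator_r (r s : R) : upd (equator r) ir s = equator s.
Proof. by apply/funext => i; rewrite /upd /equator; case: eqP => // ->. Qed.

Lemma partial_r_equator (F : ('I_4 -> R) -> R) (r v : R) :
  is_derive r 1 (fun s => F (equator s)) v -> partial F ir (equator r) = v.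
Proof.
by move=> h; apply: partialE; under eq_fun do rewrite upd_equator_r.
Qed.

Lemma sqrt_sqr_add_sqr_neq0 (r : R) : Num.sqrt (r ^+ 2 + l ^+ 2) != 0.
Proof. by rewrite gt_eqF // sqrtr_gt0 sqr_add_sqr_gt0. Qed.

Lemma gmet_equator_tt (s : R) : gmet m a l Q (equator s) it it =
  2 * m / Num.sqrt (s ^+ 2 + l ^+ 2) + - Q ^+ 2 / (s ^+ 2 + l ^+ 2) + -1.
Proof.
rewrite /gmet !mxE /rho2 /Delta /w1 /w2 /crd /cth /equator /= cos_pihalf sin_pihalf.
have hq := sqrt_sqr_add_sqr_neq0 s.
have hq2 := sqr_sqrtr (ltW (sqr_add_sqr_gt0 s)).
by move: (Num.sqrt _) hq hq2 => q hq <-; field.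
Qed.

Lemma gmet_equator_pht (s : R) : gmet m a l Q (equator s) iph it =
  - 2 * m * a / Num.sqrt (s ^+ 2 + l ^+ 2) + a * Q ^+ 2 / (s ^+ 2 + l ^+ 2) + 0.
Proof.
rewrite /gmet !mxE /rho2 /Delta /w1 /w2 /crd /cth /equator /= cos_pihalf sin_pihalf.
have hq := sqrt_sqr_add_sqr_neq0 s.
have hq2 := sqr_sqrtr (ltW (sqr_add_sqr_gt0 s)).
by move: (Num.sqrt _) hq hq2 => q hq <-; field.
Qed.

Lemma dr_gmet_tt (r : R) : partial (fun y => gmet m a l Q y it it) ir (equator r) =
  - 2 * m * r / Num.sqrt (r ^+ 2 + l ^+ 2) ^+ 3 + 2 * Q ^+ 2 * r / (r ^+ 2 + l ^+ 2) ^+ 2.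
Proof.
apply: partial_r_equator; under eq_fun do rewrite gmet_equator_tt.
by apply: is_derive_eq (is_derive_radial_potential _ _ _ (sqr_add_sqr_gt0 r)) _; ring.
Qed.

Lemma dr_gmet_pht (r : R) : partial (fun y => gmet m a l Q y iph it) ir (equator r) =
  2 * m * a * r / Num.sqrt (r ^+ 2 + l ^+ 2) ^+ 3 - 2 * a * Q ^+ 2 * r / (r ^+ 2 + l ^+ 2) ^+ 2.
Proof.
apply: partial_r_equator; under eq_fun do rewrite gmet_equator_pht.
by apply: is_derive_eq (is_derive_radial_potential _ _ _ (sqr_add_sqr_gt0 r)) _; ring.
Qed.

Lemma dr_gmet_thth (r : R) : partial (fun y => gmet m a l Q y ith ith) ir (equator r) = 2 * r.
Proof.
apply: partial_r_equator.
have -> : (fun s => gmet m a l Q (equator s) ith ith) = fun s => s ^+ 2 + l ^+ 2.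
  by apply/funext => s; rewrite /gmet !mxE /rho2 /w1 /w2 /crd /cth /equator /= cos_pihalf; ring.
exact: is_derive_sqr_add.
Qed.

Lemma dr_fKY_tth (r : R) : partial (fun y => fKY a l y it ith) ir (equator r) =
  a * (r / Num.sqrt (r ^+ 2 + l ^+ 2)).
Proof.
apply: partial_r_equator.
have -> : (fun s => fKY a l (equator s) it ith) = fun s => a * Num.sqrt (s ^+ 2 + l ^+ 2).
  by apply/funext => s; rewrite /fKY /fpart /crd /cth /equator /= sin_pihalf subr0 mulr1.
by have := is_derive_sqrt_sqr_add (sqr_add_sqr_gt0 r) => dq; apply: is_derive_eq.
Qed.

Lemma dth_fKY_tr (r : R) : partial (fun y => fKY a l y it ir) ith (equator r) = a.
Proof.
apply: partialE.
have -> : (fun s => fKY a l (upd (equator r) ith s) it ir) = fun s => - a * cos s.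
  by apply/funext => s; rewrite /fKY /fpart /cth /upd /= subr0.
by apply: is_derive_eq; rewrite /GRing.scale /= sin_pihalf mulrN1 opprK.
Qed.

Lemma inDomain_equator (r : R) : Delta m a l Q (equator r) != 0 -> inDomain m a l Q (equator r).
Proof.
move=> hD; split => //; split; last by rewrite /cth /equator /= sin_pihalf oner_neq0.
by rewrite /rho2 /crd /cth /equator /= cos_pihalf expr0n mulr0 addr0 gt_eqF ?sqr_add_sqr_gt0.
Qed.

Lemma Delta_equator_gt0 (r : R) : 2 * `|m| <= r -> 0 < Delta m a l Q (equator r).
Proof.
move=> hr; rewrite /Delta /crd /equator /=.
have hq := lt_sqrt_sqr_add_sqr r.
have hq2 := sqr_sqrtr (ltW (sqr_add_sqr_gt0 r)).
move: (Num.sqrt _) hq hq2 => q hq <-.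
have hm := ler_norm m; have hm0 := normr_ge0 m.
have : 0 < q * (q - 2 * m) by apply: mulr_gt0; lra.
nra.
Qed.

Lemma covf_sym_equator (r : R) : Delta m a l Q (equator r) != 0 ->
  covf_sym m a l Q (equator r) it ir ith = a * (1 - r / Num.sqrt (r ^+ 2 + l ^+ 2)).
Proof.
move=> hD; rewrite /covf_sym /covf /Gamma !big_ord4 ginvE; last exact: inDomain_equator.
rewrite dr_gmet_thth dr_gmet_tt dr_gmet_pht dth_fKY_tr dr_fKY_tth !partial_gmet_t !partial_gmet_ph.
rewrite !partial_gmet_thr !partial_gmet_rth.
rewrite /ginv_kerr !mxE /v1 /v2 /fKY /fpart /rho2 /Delta /crd /cth /equator /= cos_pihalf sin_pihalf.
have hq := sqrt_sqr_add_sqr_neq0 r.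
have hq2 := sqr_sqrtr (ltW (sqr_add_sqr_gt0 r)).
move: hD; rewrite /Delta /crd /equator /=.
by move: (Num.sqrt _) hq hq2 => q hq <- hD; field; rewrite hq hD.
Qed.

Lemma fKY_not_Killing_Yano : a != 0 ->
  exists x : 'I_4 -> R, inDomain m a l Q x /\
    exists mu nu al : 'I_4, covf_sym m a l Q x mu nu al != 0.
Proof.
move=> ha; have hD : Delta m a l Q (equator (2 * `|m|)) != 0 by rewrite gt_eqF ?Delta_equator_gt0.
exists (equator (2 * `|m|)); split; first exact: inDomain_equator.
exists it, ir, ith; rewrite covf_sym_equator // mulf_neq0 // subr_eq0 eq_sym lt_eqF //.
by rewrite ltr_pdivrMr ?mul1r ?lt_sqrt_sqr_add_sqr // sqrtr_gt0 sqr_add_sqr_gt0.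
Qed.
End Equator.

Theorem mainTheorem9 (R : realType) (m a l Q : R) :
  (forall x : 'I_4 -> R, inDomain m a l Q x ->
     forall mu nu : 'I_4,
       \sum_(al < 4) \sum_(be < 4)
          fKY a l x mu al * ginv m a l Q x al be * fKY a l x nu be
       = Kil m a l Q x mu nu)
  /\
  (l != 0 -> a != 0 ->
     exists x : 'I_4 -> R, inDomain m a l Q x /\
       exists mu nu al : 'I_4, covf_sym m a l Q x mu nu al != 0).
Proof. by split; [exact: fKY_ginv_fKY | exact: fKY_not_Killing_Yano]. Qed.
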